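(* Let $\mathcal{H}$ be a real Hilbert space, let $T\ge 1$ be an integer, and let $\Psi:\mathcal{H}\to\mathbb{R}$ be a convex function. Consider any algorithm for the player in the online linear optimization game of $T$ rounds, and let $\hat{\epsilon}\in\mathbb{R}$ be a constant. The algorithm guarantees \[ \operatorname{Reward}\ \ge\ \Psi(-g_{1:T})-\hat{\epsilon}\qquad\text{for every sequence } g_1,\dots,g_T \] if and only if it guarantees \[ \operatorname{Regret}(u)\ \le\ \Psi^*(u)+\hat{\epsilon}\qquad\text{for every sequence } g_1,\dots,g_T \text{ and all } u\in\mathcal{H}. \]
   Context: Online linear optimization game: on rounds $t=1,\dots,T$ the player chooses $w_t\in\mathcal{H}$ (possibly depending on $g_1,\dots,g_{t-1}$), then an adversary chooses $g_t\in\mathcal{G}\subseteq\mathcal{H}$, and the player suffers loss $\langle w_t,g_t\rangle$. Write $g_{1:t}=\sum_{s=1}^t g_s$. Define $\operatorname{Reward}=\sum_{t=1}^T\langle -g_t,w_t\rangle$ and, for a comparator $u\in\mathcal{H}$, $\operatorname{Regret}(u)=\sum_{t=1}^T\langle g_t,w_t-u\rangle$. For a function $f$ with domain $S\subseteq\mathcal{H}$, its Fenchel conjugate is $f^*(u)=\sup_{v\in S}(\langle v,u\rangle-f(v))$.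
   Formalization: Ψ is taken to be lower semicontinuous in the norm topology of $\mathcal{H}$ as well as convex. The paper assumes this as well. *)

From HB Require Import structures.
From mathcomp Require Import all_boot all_order all_algebra.
From mathcomp Require Import all_classical all_reals all_analysis.
Set Implicit Arguments. Unset Strict Implicit. Unset Printing Implicit Defensive.
Import Order.TTheory GRing.Theory Num.Theory.
Import numFieldNormedType.Exports.
Local Open Scope classical_set_scope.
Local Open Scope ring_scope.

(* [ip] is an inner product on the real normed space [H] inducing its norm;
   together with completeness of [H] this makes [H] a real Hilbert space. *)
Definition is_inner_product (R : realType) (H : normedModType R)
    (ip : H -> H -> R) : Prop :=
  [/\ forall x y, ip x y = ip y x,
      forall a x y z, ip (a *: x + y) z = a * ip x z + ip y z
    & forall x, ip x x = `|x| ^+ 2].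

Definition convex_fun (R : realType) (H : normedModType R) (f : H -> R) : Prop :=
  forall (x y : H) (t : R), 0 <= t -> t <= 1 ->
    f (t *: x + (1 - t) *: y) <= t * f x + (1 - t) * f y.

Definition lsc_fun (R : realType) (H : normedModType R) (f : H -> R) : Prop :=
  forall (x : H) (a : R), a < f x ->
    exists2 d : R, 0 < d & forall y : H, `|y - x| < d -> a < f y.

Definition fenchel_conj (R : realType) (H : normedModType R)
    (ip : H -> H -> R) (f : H -> R) (u : H) : \bar R :=
  ereal_sup [set ((ip v u - f v)%:E) | v in [set: H]].

(* A (deterministic) player algorithm maps the history g_1..g_{t-1} to w_t.
   Rounds are indexed 0..T-1; the play at round t is alg [:: g 0; ...; g (t-1)]. *)
Definition play (R : realType) (H : normedModType R)
    (alg : seq H -> H) (g : nat -> H) (t : nat) : H :=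
  alg [seq g s | s <- iota 0 t].

Definition reward (R : realType) (H : normedModType R) (ip : H -> H -> R)
    (alg : seq H -> H) (T : nat) (g : nat -> H) : R :=
  \sum_(t < T) ip (- g t) (play alg g t).

Definition regret (R : realType) (H : normedModType R) (ip : H -> H -> R)
    (alg : seq H -> H) (T : nat) (g : nat -> H) (u : H) : R :=
  \sum_(t < T) ip (g t) (play alg g t - u).

Definition gsum (R : realType) (H : normedModType R) (T : nat) (g : nat -> H) : H :=
  \sum_(t < T) g t.

From mathcomp Require Import all_boot all_order all_algebra.
From mathcomp Require Import all_classical all_reals all_analysis.
From mathcomp Require Import ring lra.
Import Order.TTheory GRing.Theory Num.Theory.
Import numFieldNormedType.Exports.
Local Open Scope classical_set_scope.
Local Open Scope ring_scope.
Set Implicit Arguments.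

(* Regret(u) = <-g_{1:T}, u> - Reward, so the forward implication is the
   Fenchel-Young inequality. For the converse, a convex lower semicontinuous
   function on a Hilbert space lies above an affine minorant through any point
   below its graph: given a < Psi x, the function Psi + c |. - x|^2 is strongly
   convex and lower semicontinuous, so by the parallelogram law its minimizing
   sequences are Cauchy and it attains its minimum at some y; the first-order
   condition at y makes v |-> a + <v - x, 2c (x - y)> such a minorant, which
   bounds Psi^* at 2c (x - y) well enough to contradict a reward below
   Psi(x) - eps. Neither the constraint set G nor T >= 1 plays a role. *)

Section InnerProduct.
Variables (R : realType) (H : normedModType R) (ip : H -> H -> R).
Hypothesis ipP : is_inner_product ip.

Lemma ipC x y : ip x y = ip y x. Proof. by case: ipP. Qed.

Lemma ipxx x : ip x x = `|x| ^+ 2. Proof. by case: ipP. Qed.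

Lemma ip0l z : ip 0 z = 0.
Proof. by case: ipP => _ /(_ 1 0 0 z); rewrite scaler0 addr0 mul1r; lra. Qed.

Lemma ipDl x y z : ip (x + y) z = ip x z + ip y z.
Proof. by case: ipP => _ /(_ 1 x y z); rewrite scale1r mul1r. Qed.

Lemma ipZl a x z : ip (a *: x) z = a * ip x z.
Proof. by case: ipP => _ /(_ a x 0 z); rewrite addr0 ip0l addr0. Qed.

Lemma ipNl x z : ip (- x) z = - ip x z.
Proof. by rewrite -scaleN1r ipZl mulN1r. Qed.

Lemma ipBl x y z : ip (x - y) z = ip x z - ip y z.
Proof. by rewrite ipDl ipNl. Qed.

Lemma ipDr x y z : ip z (x + y) = ip z x + ip z y.
Proof. by rewrite ipC ipDl !(ipC z). Qed.

Lemma ipZr a x z : ip z (a *: x) = a * ip z x.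
Proof. by rewrite ipC ipZl ipC. Qed.

Lemma ipNr x z : ip z (- x) = - ip z x.
Proof. by rewrite ipC ipNl ipC. Qed.

Lemma ipBr x y z : ip z (x - y) = ip z x - ip z y.
Proof. by rewrite ipDr ipNr. Qed.

Lemma ip_suml I (r : seq I) (P : pred I) (F : I -> H) u :
  ip (\sum_(i <- r | P i) F i) u = \sum_(i <- r | P i) ip (F i) u.
Proof. by apply: (big_morph (ip^~ u)) => [p q|]; [exact: ipDl|exact: ip0l]. Qed.

Lemma sqr_normD (x y : H) : `|x + y| ^+ 2 = `|x| ^+ 2 + 2 * ip x y + `|y| ^+ 2.
Proof. by rewrite -!ipxx ipDl !ipDr (ipC y x); ring. Qed.

Lemma parallelogram (x y : H) :
  `|x + y| ^+ 2 + `|x - y| ^+ 2 = 2 * (`|x| ^+ 2 + `|y| ^+ 2).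
Proof. by rewrite !sqr_normD normrN ipNr; ring. Qed.

End InnerProduct.

Lemma ge0_of_ge0_affine (R : realFieldType) (A B : R) :
  (forall t, 0 < t -> t <= 1 -> 0 <= A + t * B) -> 0 <= A.
Proof.
move=> h; rewrite leNgt; apply/negP => A0.
have den : 0 < `|B| - A by have := normr_ge0 B; lra.
set t := - A / (`|B| - A).
have t0 : 0 < t by rewrite divr_gt0 // oppr_gt0.
have tden : t * (`|B| - A) = - A by rewrite /t divfK // gt_eqF.
have t1 : t <= 1 by rewrite /t ler_pdivrMr // mul1r; have := normr_ge0 B; lra.
have := h t t0 t1; have := ler_norm B; nra.
Qed.

Lemma convex_combB (R : pzRingType) (V : lmodType R) (t : R) (v y x : V) :
  t *: v + (1 - t) *: y - x = (y - x) + t *: (v - y).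
Proof. by rewrite scalerBl scale1r scalerBr addrCA addrAC. Qed.

Section LowerSemicontinuity.
Variables (R : realType) (H : normedModType R).

Lemma continuous_lsc (f : H -> R) : continuous f -> lsc_fun f.
Proof.
move=> fc x a ax; have e0 : 0 < f x - a by rewrite subr_gt0.
have /cvgr_dist_lt/(_ _ e0)/nbhs_normP[d d0 hd] := fc x.
exists d => // y xy; have := hd y; rewrite /ball_ /= distrC => /(_ xy).
have := ler_norm (f x - f y); lra.
Qed.

Lemma lsc_funD (f g : H -> R) :
  lsc_fun f -> lsc_fun g -> lsc_fun (fun v => f v + g v).
Proof.
move=> fl gl x a /= ax; set e := (f x + g x - a) / 2.
have [df df0 hf] := fl x (f x - e) ltac:(rewrite /e; lra).
have [dg dg0 hg] := gl x (g x - e) ltac:(rewrite /e; lra).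
exists (Num.min df dg) => [|y]; first by rewrite lt_min df0.
rewrite lt_min => /andP[/hf yf /hg yg] /=; rewrite /e in yf yg; lra.
Qed.

Lemma continuous_sqr_dist (c : R) (x : H) :
  continuous (fun v => c * `|v - x| ^+ 2).
Proof.
move=> y; apply: cvgM; first exact: cvg_cst.
under eq_fun do rewrite expr2.
by apply: cvgM; apply: cvg_norm; apply: cvgB => //; exact: cvg_cst.
Qed.

End LowerSemicontinuity.

Lemma midpoint_strongly_convex_lsc_min (R : realType)
    (H : completeNormedModType R) (F : H -> R) (b c : R) :
  0 < c -> (forall v, b <= F v) -> lsc_fun F ->
  (forall p q, c * `|p - q| ^+ 2 <= F p + F q - 2 * F (2^-1 *: (p + q))) ->
  exists y, forall v, F y <= F v.
Proof.
move=> c0 Fb Flsc Fmid.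
have Einf : has_inf (range F) by split; [exists (F 0), 0|exists b => _ [v _ <-]].
set m := inf (range F).
have le_m v : m <= F v by apply: (ge_inf Einf.2); exists v.
have /choice[vs vs_lt] n : exists v, F v < m + n.+1%:R^-1.
  have n0 : 0 < n.+1%:R^-1 :> R by rewrite invr_gt0.
  by have [_ [v _ <-] ?] := inf_adherent n0 Einf; exists v.
have near_m e : 0 < e -> \forall n \near \oo, F (vs n) < m + e.
  move=> e0; near=> n; apply: (lt_le_trans (vs_lt n)); rewrite lerD2l ltW //.
  by near: n; exact: (near_infty_natSinv_lt (PosNum e0)).
have vs_cauchy : cauchy (vs @ \oo).
  apply: cauchy_exP => e e0.
  have e'0 : 0 < c * e ^+ 2 / 2 by rewrite divr_gt0 // mulr_gt0 // exprn_gt0.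
  have [N _ vsN] := near_m _ e'0.
  exists (vs N); exists N => // n /= Nn; rewrite -ball_normE /ball_ /=.
  have := Fmid (vs N) (vs n); have := le_m (2^-1 *: (vs N + vs n)).
  have := vsN N (leqnn N); have := vsN n Nn => hn hN hmid hpq.
  have : `|vs N - vs n| ^+ 2 < e ^+ 2.
    by rewrite -(ltr_pM2l c0); apply: (le_lt_trans hpq); lra.
  by have := normr_ge0 (vs N - vs n); nra.
have /cauchy_cvg vs_cvg := vs_cauchy.
exists (lim (vs @ \oo)) => v; apply: le_trans (le_m v).
set y := lim _ in vs_cvg *; rewrite leNgt; apply/negP => my.
have [d d0 hd] := Flsc y ((m + F y) / 2) ltac:(lra).
near \oo => n.
have lt_vs : (m + F y) / 2 < F (vs n).
  apply: hd; rewrite distrC; near: n; exact: cvgr_dist_lt.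
have vs_lt' : F (vs n) < m + (F y - m) / 2.
  by near: n; apply: near_m; lra.
lra.
Unshelve. all: by end_near.
Qed.

Lemma convex_ge_cone {R : realType} {H : normedModType R} {f : H -> R}
    {x : H} {a d : R} : convex_fun f -> 0 < d ->
  (forall y, `|y - x| < d -> a < f y) ->
  forall v, a - 2 * (f x - a) * (`|v - x| / d) <= f v.
Proof.
move=> fconv d0 hd v; have ax : a < f x by apply: hd; rewrite subrr normr0.
have [vx|dvx] := ltP `|v - x| d.
  have : 0 <= 2 * (f x - a) * (`|v - x| / d).
    by apply: mulr_ge0; [rewrite mulr_ge0 // subr_ge0 ltW|rewrite divr_ge0 // ltW].
  by have := hd v vx; lra.
set r := `|v - x| in dvx *; set t := d / (2 * r).
have r0 : 0 < r by apply: lt_le_trans dvx.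
have t0 : 0 < t by rewrite divr_gt0 // mulr_gt0.
have t1 : t <= 1 by rewrite ler_pdivrMr ?mulr_gt0 //; lra.
have az : a < f (t *: v + (1 - t) *: x).
  apply: hd; rewrite convex_combB subrr add0r normrZ gtr0_norm //.
  have -> : t * r = d / 2 by rewrite /t; field; rewrite gt_eqF.
  lra.
have tK : t * (2 * (f x - a) * (r / d)) = f x - a.
  by rewrite /t; field; rewrite !gt_eqF.
rewrite -(ler_pM2l t0) mulrBr tK; have := fconv v x t (ltW t0) t1; nra.
Qed.

Lemma convex_add_sqr_dist_midpoint {R : realType} {H : normedModType R}
    {ip : H -> H -> R} {f : H -> R} (x : H) (c : R) (p q : H) :
  is_inner_product ip -> convex_fun f ->
  c / 2 * `|p - q| ^+ 2 <=
    f p + c * `|p - x| ^+ 2 + (f q + c * `|q - x| ^+ 2)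
    - 2 * (f (2^-1 *: (p + q)) + c * `|2^-1 *: (p + q) - x| ^+ 2).
Proof.
move=> ipP fconv; have h0 : 0 <= 2^-1 :> R by lra.
have h1 : 2^-1 <= 1 :> R by lra.
have := fconv p q _ h0 h1.
have -> : 2^-1 *: p + (1 - 2^-1) *: q = 2^-1 *: (p + q).
  by rewrite scalerDr; congr (_ + _ *: _); field.
have -> : 2^-1 *: (p + q) - x = 2^-1 *: ((p - x) + (q - x)).
  rewrite addrACA -opprD scalerBr; congr (_ - _).
  by rewrite scalerDr -scalerDl [_ + _](_ : _ = 1) ?scale1r //; field.
have -> : p - q = (p - x) - (q - x) by rewrite opprB addrA subrK.
have := parallelogram ipP (p - x) (q - x).
rewrite normrZ ger0_norm // exprMn; set P := p - x; set Q := q - x => par.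
have -> : `|P + Q| ^+ 2 = 2 * (`|P| ^+ 2 + `|Q| ^+ 2) - `|P - Q| ^+ 2 by lra.
lra.
Qed.

Lemma convex_add_sqr_dist_argmin {R : realType} {H : normedModType R}
    {ip : H -> H -> R} {f : H -> R} {x : H} {c : R} {y : H} :
  is_inner_product ip -> convex_fun f ->
  (forall v, f y + c * `|y - x| ^+ 2 <= f v + c * `|v - x| ^+ 2) ->
  forall v, 0 <= f v - f y + 2 * c * ip (y - x) (v - y).
Proof.
move=> ipP fconv ymin v.
apply: (@ge0_of_ge0_affine _ _ (c * `|v - y| ^+ 2)) => t t0 t1.
rewrite -(pmulr_rge0 _ t0); have := ymin (t *: v + (1 - t) *: y).
rewrite convex_combB (sqr_normD ipP (y - x)) normrZ gtr0_norm // (ipZr ipP).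
by have := fconv v y t (ltW t0) t1; nra.
Qed.

Lemma convex_lsc_affine_minorant {R : realType} {H : completeNormedModType R}
    {ip : H -> H -> R} {f : H -> R} {x : H} {a : R} :
  is_inner_product ip -> convex_fun f -> lsc_fun f -> a < f x ->
  exists u, forall v, a + ip (v - x) u <= f v.
Proof.
move=> ipP fconv flsc ax; have [d d0 hd] := flsc x a ax.
(* With c = (f x - a) / d^2 the cone bound keeps f + c |. - x|^2 above
   a - (f x - a), and outside the ball of radius d it gives
   a <= f y + 2c |x - y|^2. *)
set del := f x - a; have del0 : 0 < del by rewrite subr_gt0.
set c := del / d ^+ 2; have c0 : 0 < c by rewrite divr_gt0 // exprn_gt0.
have cone v : a - 2 * del * (`|v - x| / d) <= f v by exact: convex_ge_cone.
have c_sqr v : c * `|v - x| ^+ 2 = del * (`|v - x| / d) ^+ 2.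
  by rewrite /c; field; rewrite gt_eqF.
have [y ymin] : exists y, forall v,
    f y + c * `|y - x| ^+ 2 <= f v + c * `|v - x| ^+ 2.
  apply: (@midpoint_strongly_convex_lsc_min _ _ _ (a - del) (c / 2)).
  - by rewrite divr_gt0.
  - move=> v; have := cone v; rewrite c_sqr.
    by have := mulr_ge0 (ltW del0) (sqr_ge0 (`|v - x| / d - 1)); lra.
  - by apply: lsc_funD => //; apply: continuous_lsc; exact: continuous_sqr_dist.
  - by move=> p q; have := convex_add_sqr_dist_midpoint x c p q ipP fconv.
have ay : a <= f y + 2 * c * `|x - y| ^+ 2.
  rewrite distrC; have := c_sqr y.
  have [yx|dyx] := ltP `|y - x| d.
    by have := hd y yx; have := mulr_ge0 (ltW del0) (sqr_ge0 (`|y - x| / d)); lra.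
  have s1 : 1 <= `|y - x| / d by rewrite ler_pdivlMr ?mul1r.
  have : 0 <= del * (`|y - x| / d * (`|y - x| / d - 1)).
    by apply: mulr_ge0; [exact: ltW|apply: mulr_ge0; lra].
  by have := cone y; lra.
exists ((2 * c) *: (x - y)) => v.
have := convex_add_sqr_dist_argmin ipP fconv ymin v.
have -> : v - y = (v - x) + (x - y) by rewrite addrA subrK.
rewrite -(opprB x y) (ipNl ipP) (ipDr ipP) (ipZr ipP) (ipxx ipP) (ipC ipP (x - y)).
lra.
Qed.

Lemma fenchel_young {R : realType} {H : normedModType R}
    {ip : H -> H -> R} {f : H -> R} (u v : H) :
  ((ip v u - f v)%:E <= fenchel_conj ip f u)%E.
Proof. by apply: ereal_sup_ubound; exists v. Qed.

Lemma fenchel_conj_le_affine {R : realType} {H : normedModType R}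
    {ip : H -> H -> R} {f : H -> R} {u x : H} {a : R} :
  is_inner_product ip -> (forall v, a + ip (v - x) u <= f v) ->
  (fenchel_conj ip f u <= (ip x u - a)%:E)%E.
Proof.
move=> ipP hu; apply: ge_ereal_sup => _ [v _ <-]; rewrite lee_fin.
by have := hu v; rewrite (ipBl ipP); lra.
Qed.

Lemma regretE {R : realType} {H : normedModType R} {ip : H -> H -> R}
    (ipP : is_inner_product ip) (alg : seq H -> H) (T : nat) (g : nat -> H)
    (u : H) :
  regret ip alg T g u = ip (- gsum T g) u - reward ip alg T g.
Proof.
rewrite /regret /reward /gsum (ipNl ipP) (ip_suml ipP).
rewrite -sumrN -sumrB; apply: eq_bigr => t _.
by rewrite (ipBr ipP) (ipNl ipP) opprK addrC.
Qed.

Theorem theorem1 (R : realType) (H : completeNormedModType R)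
  (ip : H -> H -> R) (Hip : is_inner_product ip)
  (G : set H) (T : nat) (HT : (1 <= T)%N)
  (Psi : H -> R) (Pconv : convex_fun Psi) (Plsc : lsc_fun Psi)
  (alg : seq H -> H) (eps : R) :
  (forall g : nat -> H, (forall t, (t < T)%N -> G (g t)) ->
     reward ip alg T g >= Psi (- gsum T g) - eps)
  <->
  (forall g : nat -> H, (forall t, (t < T)%N -> G (g t)) ->
     forall u : H, ((regret ip alg T g u)%:E <= fenchel_conj ip Psi u + eps%:E)%E).
Proof.
split=> [reward_ge g gG u | regret_le g gG].
  apply: le_trans _ (leeD2r eps%:E (fenchel_young u (- gsum T g))).
  by rewrite -EFinD lee_fin (regretE Hip); have := reward_ge g gG; lra.
rewrite leNgt; apply/negP => reward_lt; set x := - gsum T g in reward_lt.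
set a := (Psi x + (reward ip alg T g + eps)) / 2.
have ax : a < Psi x by rewrite /a; lra.
have [u hu] := convex_lsc_affine_minorant Hip Pconv Plsc ax.
have := le_trans (regret_le g gG u) (leeD2r eps%:E (fenchel_conj_le_affine Hip hu)).
by rewrite -EFinD lee_fin (regretE Hip) -/x /a; lra.
Qed.
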